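(* Let $p$ be a prime, $k$ a positive integer, and $n=p^k$. Then \[\operatorname{disc}(\mathcal A_n)\ge\frac14\,p^{\frac{k-\lfloor k/3\rfloor}{2}}.\]
   Context: An arithmetic progression in $\mathbb{Z}_n$ is a set $\{a+kd: 0\le k<l\}$ with $a,d\in\mathbb{Z}_n$ and $l$ an integer with $0\le l\le n/\gcd(n,d)$ (with $\gcd(0,n)=n$); $\mathcal A_n$ is the family of all of them. For $\chi:\mathbb{Z}_n\to\{1,-1\}$, $\chi(A)=\sum_{x\in A}\chi(x)$ and $\operatorname{disc}(\mathcal A_n)=\min_{\chi:\mathbb{Z}_n\to\{1,-1\}}\max_{A\in\mathcal A_n}|\chi(A)|$. *)

From mathcomp Require Import all_boot all_order all_algebra.
Set Implicit Arguments. Unset Strict Implicit. Unset Printing Implicit Defensive.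
Import GRing.Theory Num.Theory.

(* Z_n is modelled by 'I_n (residues 0..n-1), arithmetic done modulo n. *)

Definition ap (n : nat) (a d l : nat) : {set 'I_n} :=
  [set x : 'I_n | [exists i : 'I_n, (i < l) && (nat_of_ord x == (a + i * d) %% n)]].

(* Admissible length: 0 <= l <= n / gcd(n, d)  (gcdn 0 n = n). *)
Definition ap_ok (n : nat) (d : 'I_n) (l : 'I_n.+1) : bool := l <= n %/ gcdn n d.

Definition chi_sum (n : nat) (chi : {ffun 'I_n -> bool}) (A : {set 'I_n}) : int :=
  (\sum_(x in A) (if chi x then 1 else -1))%R.

Definition max_disc (n : nat) (chi : {ffun 'I_n -> bool}) : nat :=
  \max_(t : 'I_n * 'I_n * 'I_n.+1 | ap_ok t.1.2 t.2)
     `|chi_sum chi (ap n t.1.1 t.1.2 t.2)|%N.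

(* disc(A_n) = min over colourings; the neutral element n is harmless since
   every value max_disc is <= n. *)
Definition disc_AP (n : nat) : nat :=
  \big[minn/n]_(chi : {ffun 'I_n -> bool}) max_disc chi.

Set Warnings "-notation-overridden,-ambiguous-paths".
From Stdlib Require Import Reals.
From mathcomp Require Import all_boot.
From Stdlib Require Import Lra.
From mathcomp Require Import all_order all_algebra.
From mathcomp Require Import zify ring lra.
Import Order.TTheory GRing.Theory Num.Theory.
Set Implicit Arguments. Unset Strict Implicit. Unset Printing Implicit Defensive.

(* Fix a colouring chi of Z_N, N = p^k, with sign function sgn and maximal
   progression discrepancy D.  The proof is a second-moment argument on the
   autocorrelation corr z = sum_x sgn x * sgn (x + z):
   - for a unit u and L <= N the sums apsum L a u = sum_(i<L) sgn (a + i u)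
     run along members of A_N, so their second moment over all a and units u
     is at most N #units D^2; expanded, it is sum_(i,j<L) ucorr (j - i),
     where ucorr t = sum_(u unit) corr (t u);
   - ucorr is invariant under unit multiplication, hence is constant on each
     level p^m Z_N \ p^(m+1) Z_N and depends only on t mod p^m off p^m Z_N;
   - the correlation mass Qcorr v of the ideal p^v Z_N is the second moment
     of the coset sums, which are progression sums for v < k: it is at most
     p^v D^2;
   - for L = c p^m these facts evaluate the moment exactly, and comparing
     with its upper bound (energy_inequality, pure ordered-ring algebra) gives
     p^(m+1) c (p - c) <= D^2 (p (p - 1) + c (p - c))   (colouring_bound).
   Taking c = p/2 and m = (2k-1)/3 yields p^(k - k/3) <= 6 D^2 for every
   colouring, hence for disc(A_N); the real statement follows as 6 <= 16. *)

Local Open Scope ring_scope.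

Lemma sum_ord_blocks (R : nmodType) (F : nat -> R) n c M : n = (c * M)%N ->
  \sum_(i < n) F i = \sum_(s < c) \sum_(r < M) F (r + M * s)%N.
Proof.
move=> ->; elim: c => [|c IH]; first by rewrite mul0n !big_ord0.
rewrite mulSnr big_split_ord big_ord_recr /= IH; congr (_ + _).
by apply: eq_bigr => r _; rewrite addnC mulnC.
Qed.

Lemma sqr_le_norm (R : realDomainType) (x d : R) : `|x| <= d -> x ^+ 2 <= d ^+ 2.
Proof.
move=> xd; rewrite -[x ^+ 2]ger0_norm ?sqr_ge0 // normrX.
by rewrite lerXn2r ?nnegrE ?(le_trans _ xd).
Qed.

(* Read W = #units,
   M = p^m, G = p^(k-m-1), P = p, D2 = D^2; S is the moment of the
   progressions of length c p^m, Rs the off-diagonal correlation below p^m,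
   hM the value of ucorr on the level of p^m, and Q0, Qm, Qm1 the correlation
   masses of Z_N, p^m Z_N and p^(m+1) Z_N.  Eliminating S, Rs and hM from the
   upper bound on S leaves an inequality between the masses. *)
Lemma moment_mass_bound (R : realDomainType) (W M G P c D2 S Rs hM Q0 Qm Qm1 : R) :
  0 < W -> 0 < M -> 0 < G -> 1 < P ->
  S = c ^+ 2 * Rs + c * M * (W * (M * P * G) + (c - 1) * hM) ->
  P * G * Rs = M * W * (Q0 - Qm) ->
  (P - 1) * G * hM = W * (Qm - Qm1) ->
  S <= M * P * G * W * D2 ->
  c ^+ 2 * (P - 1) * (Q0 - Qm) + c * M * (P * G) ^+ 2 * (P - 1)
    + c * (c - 1) * P * (Qm - Qm1) <= (P * G) ^+ 2 * (P - 1) * D2.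
Proof.
move=> W0 M0 G0 P1 hS hRs hhM hSle.
have X0 : 0 < P * (P - 1) * G by rewrite !mulr_gt0 ?subr_gt0 //; lra.
have expand : S * (P * (P - 1) * G) = W * M * (c ^+ 2 * (P - 1) * (Q0 - Qm)
    + c * M * (P * G) ^+ 2 * (P - 1) + c * (c - 1) * P * (Qm - Qm1)).
  have -> : S * (P * (P - 1) * G) = c ^+ 2 * (P - 1) * (P * G * Rs)
      + c * M * W * (M * P * G) * (P * (P - 1) * G)
      + c * M * (c - 1) * P * ((P - 1) * G * hM) by rewrite hS; ring.
  by rewrite hRs hhM; ring.
rewrite -(ler_pM2l (mulr_gt0 W0 M0)) -expand.
rewrite -(ler_pM2r X0) in hSle.
by move: hSle; congr (_ <= _); ring.
Qed.

Lemma energy_inequality (R : realDomainType) (M G P c D2 Q0 Qm Qm1 : R) :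
  0 < M -> 0 < G -> 1 <= c -> c < P -> 0 <= D2 -> M * P <= (P * G) ^+ 2 ->
  c ^+ 2 * (P - 1) * (Q0 - Qm) + c * M * (P * G) ^+ 2 * (P - 1)
    + c * (c - 1) * P * (Qm - Qm1) <= (P * G) ^+ 2 * (P - 1) * D2 ->
  0 <= Q0 -> Qm <= M * D2 -> Qm1 <= M * P * G ^+ 2 ->
  P * M * (c * (P - c)) <= D2 * (P * (P - 1) + c * (P - c)).
Proof.
move=> M0 G0 c1 cP D0 hMP hB Q0_ge0 hQm hQm1.
have P0 : 0 < P by lra.
have Q0_term : 0 <= c ^+ 2 * (P - 1) * Q0.
  by rewrite mulr_ge0 // mulr_ge0 ?sqr_ge0 //; lra.
have Qm_term : c * (P - c) * Qm <= c * (P - c) * (M * D2).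
  by rewrite ler_pM2l // mulr_gt0 ?subr_gt0; lra.
have Qm1_term : c * (c - 1) * P * Qm1 <= c * (c - 1) * P * (M * P * G ^+ 2).
  by apply: ler_wpM2l hQm1; rewrite !mulr_ge0 //; lra.
have M_le : M <= P * G ^+ 2.
  move: hMP; have -> : (P * G) ^+ 2 = P * G ^+ 2 * P by ring.
  by rewrite ler_pM2r.
have M_term : c * (P - c) * M * D2 <= c * (P - c) * (P * G ^+ 2) * D2.
  by rewrite ler_wpM2r // ler_wpM2l // mulr_ge0 ?subr_ge0; lra.
have PG0 : 0 < P * G ^+ 2 by rewrite mulr_gt0 ?exprn_gt0.
rewrite -(ler_pM2l PG0); lra.
Qed.

Section Colouring.

Variable n' : nat.
Local Notation N := n'.+2.
Local Notation Z := 'I_n'.+2.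
Variable chi : {ffun Z -> bool}.

Lemma val_natZ m : val (m%:R : Z) = (m %% N)%N.
Proof. exact: (val_Zp_nat (p:=n'.+2) isT m). Qed.

Lemma unit_natZ m : ((m%:R : Z) \is a GRing.unit) = coprime N m.
Proof. exact: (unitZpE (p:=n'.+2) m isT). Qed.

Lemma natZ_val (x : Z) : (val x)%:R = x.
Proof. exact: natr_Zp. Qed.

Lemma sumZ_nat (F : Z -> int) : \sum_x F x = \sum_(i < N) F (i%:R).
Proof. by apply: eq_bigr => x _; rewrite natZ_val. Qed.

Lemma sum_translate (F : Z -> int) (y : Z) : \sum_x F (x + y) = \sum_x F x.
Proof. by rewrite [RHS](reindex_inj (addIr y)). Qed.

Definition sgn (x : Z) : int := if chi x then 1 else -1.

Lemma sgn_sqr x : sgn x * sgn x = 1.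
Proof. by rewrite /sgn; case: (chi x); rewrite ?mulrNN mulr1. Qed.

Lemma norm_sgn x : `|sgn x| = 1.
Proof. by rewrite /sgn; case: (chi x); rewrite ?normrN normr1. Qed.

(* The autocorrelation of the colouring and its total mass, which is the
   square of the total colour imbalance. *)
Definition corr (z : Z) : int := \sum_x sgn x * sgn (x + z).
Definition corr_total : int := \sum_z corr z.

Lemma corr_le z : corr z <= N%:R.
Proof.
apply: le_trans (ler_norm _) _; apply: le_trans (ler_norm_sum _ _ _) _.
rewrite (eq_bigr (fun _ => 1)) ?sumr_const ?card_ord // => x _.
by rewrite normrM !norm_sgn mulr1.
Qed.

Lemma corr_total_ge0 : 0 <= corr_total.
Proof.
have -> : corr_total = (\sum_x sgn x) ^+ 2.
  rewrite /corr_total /corr exchange_big /= expr2 mulr_suml.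
  apply: eq_bigr => x _; rewrite -mulr_sumr; congr (_ * _).
  by rewrite -(sum_translate sgn x); apply: eq_bigr => z _; rewrite addrC.
exact: sqr_ge0.
Qed.

Definition Zunits : {set Z} := [set u : Z | u \is a GRing.unit].
Definition ucorr (t : Z) : int := \sum_(u in Zunits) corr (t * u).

Lemma ucorr_unit t w : w \is a GRing.unit -> ucorr (t * w) = ucorr t.
Proof.
move=> wU; rewrite /ucorr [RHS](reindex_inj (mulrI wU)) /=.
apply: eq_big => [u|u _]; last by rewrite mulrA.
by rewrite !inE unitrMr.
Qed.

Lemma ucorr0 : ucorr 0 = (#|Zunits|)%:R * N%:R.
Proof.
rewrite /ucorr (eq_bigr (fun _ => corr 0)); last by move=> u _; rewrite mul0r.
rewrite sumr_const mulr_natl; congr (_ *+ _).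
rewrite /corr (eq_bigr (fun _ => 1)); last by move=> x _; rewrite addr0 sgn_sqr.
by rewrite sumr_const card_ord.
Qed.

Lemma sum_ucorr (A : {set Z}) :
  (forall u z, u \is a GRing.unit -> (z * u \in A) = (z \in A)) ->
  \sum_(t in A) ucorr t = (#|Zunits|)%:R * \sum_(z in A) corr z.
Proof.
move=> hA; rewrite /ucorr exchange_big /=.
rewrite (eq_bigr (fun _ => \sum_(z in A) corr z)) ?sumr_const ?mulr_natl // => u.
rewrite inE => uU; rewrite [RHS](reindex_inj (mulIr uU)) /=.
by apply: eq_bigl => z; rewrite hA.
Qed.

Lemma sum_ucorr_all : \sum_t ucorr t = (#|Zunits|)%:R * corr_total.
Proof.
rewrite /corr_total -[LHS](eq_bigl _ _ (fun x => in_setT x)).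
by rewrite sum_ucorr ?(eq_bigl _ _ (fun x => in_setT x)) // => *; rewrite !inE.
Qed.

Definition D : nat := max_disc chi.

Lemma val_ap_term (a d : Z) i : val (a + i%:R * d) = ((val a + i * val d) %% N)%N.
Proof. by rewrite -[a]natZ_val -[d]natZ_val -natrM -natrD val_natZ !natZ_val. Qed.

Lemma chi_sum_ap (a d : Z) l : (l <= N)%N ->
  (forall i j : nat, (i < l)%N -> (j < l)%N -> i%:R * d = j%:R * d -> i = j) ->
  chi_sum chi (ap N a d l) = \sum_(i < l) sgn (a + i%:R * d).
Proof.
move=> lN inj; pose g (i : 'I_l) : Z := a + (val i)%:R * d.
have -> : ap N a d l = [set g i | i in [set: 'I_l]].
  apply/setP=> x; rewrite inE; apply/existsP/imsetP.
    case=> i /andP[il /eqP xi]; exists (Ordinal il); first by rewrite inE.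
    by apply: val_inj; rewrite /g val_ap_term.
  case=> i _ ->; have iN : (i < N)%N by apply: leq_trans lN.
  by exists (Ordinal iN); rewrite /g val_ap_term eqxx andbT; exact: (ltn_ord i).
rewrite /chi_sum big_imset /=; last first.
  by move=> i j _ _ /addrI /(inj _ _ (ltn_ord i) (ltn_ord j)) /val_inj.
by apply: eq_big => // i; rewrite inE.
Qed.

Lemma ap_le_D (a d : Z) l (lN : (l < N.+1)%N) : (l <= N %/ gcdn N d)%N ->
  `|chi_sum chi (ap N a d l)| <= (D : int).
Proof.
move=> ok; rewrite -abszE lez_nat /D /max_disc.
exact: (leq_bigmax_cond
  (F := fun t : Z * Z * 'I_N.+1 => `|chi_sum chi (ap N t.1.1 t.1.2 t.2)|%N)
  ((a, d), Ordinal lN)).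
Qed.

Definition apsum L a u : int := \sum_(i < L) sgn (a + i%:R * u).

Lemma apsum_le_D L a u : u \in Zunits -> (L <= N)%N -> `|apsum L a u| <= (D : int).
Proof.
rewrite inE => uU LN; rewrite /apsum -chi_sum_ap //; last first.
  move=> i j iL jL /(mulIr uU) /(congr1 val).
  by rewrite !val_natZ !modn_small // (leq_trans _ LN).
apply: (@ap_le_D a u L LN).
have : coprime N u by rewrite -unit_natZ natZ_val.
by rewrite /coprime => /eqP ->; rewrite divn1.
Qed.

Lemma sum_apsum_sqr L u :
  \sum_a (apsum L a u) ^+ 2 = \sum_(i < L) \sum_(j < L) corr ((j%:R - i%:R) * u).
Proof.
rewrite /apsum.
transitivity (\sum_a \sum_(i < L) \sum_(j < L) sgn (a + i%:R * u) * sgn (a + j%:R * u)).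
  apply: eq_bigr => x _; rewrite expr2 mulr_suml; apply: eq_bigr => z _.
  by rewrite mulr_sumr.
rewrite exchange_big /=; apply: eq_bigr => i _; rewrite exchange_big /=.
apply: eq_bigr => j _; rewrite /corr -(sum_translate _ (- (i%:R * u))).
by apply: eq_bigr => x _; rewrite addrNK; congr (_ * sgn _); ring.
Qed.

Definition moment L : int := \sum_a \sum_(u in Zunits) (apsum L a u) ^+ 2.

Lemma moment_eq L : moment L = \sum_(i < L) \sum_(j < L) ucorr (j%:R - i%:R).
Proof.
rewrite /moment exchange_big /=.
under eq_bigr => u _ do rewrite sum_apsum_sqr.
by rewrite exchange_big /=; apply: eq_bigr => i _; rewrite exchange_big.
Qed.

Lemma moment_le L : (L <= N)%N -> moment L <= N%:R * ((#|Zunits|)%:R * (D%:Z) ^+ 2).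
Proof.
move=> LN; apply: (@le_trans _ _ (\sum_(a : Z) \sum_(u in Zunits) (D%:Z) ^+ 2)).
  apply: ler_sum => a _; apply: ler_sum => u uU.
  exact/sqr_le_norm/apsum_le_D.
rewrite (eq_bigr (fun _ => (#|Zunits|)%:R * (D%:Z) ^+ 2)).
  by rewrite sumr_const card_ord -[_ *+ N]mulr_natl.
by move=> a _; rewrite sumr_const mulr_natl.
Qed.

Section PrimePower.

Variables p k : nat.
Hypothesis p_prime : prime p.
Hypothesis N_pk : N = (p ^ k)%N.

Let p_gt0 : (0 < p)%N. Proof. exact: prime_gt0. Qed.
Let p_gt1 : (1 < p)%N. Proof. exact: prime_gt1. Qed.

Lemma pmult_split v : (v <= k)%N -> (p ^ (k - v) * p ^ v)%N = N.
Proof. by move=> vk; rewrite -expnD subnK // N_pk. Qed.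

Definition pmult (v : nat) : {set Z} := [set z : Z | (p ^ v %| z)%N].

Lemma mem_pmult v z : (v <= k)%N ->
  (z \in pmult v) = [exists y : Z, z == (p ^ v)%:R * y].
Proof.
move=> vk; rewrite inE; apply/idP/existsP.
  by case/dvdnP=> q zq; exists q%:R; rewrite -natrM mulnC -zq natZ_val.
case=> y /eqP ->; rewrite -[y]natZ_val -natrM val_natZ /dvdn modn_dvdm ?modnMr //.
by rewrite N_pk dvdn_exp2l.
Qed.

Lemma pmult_nat m x : (x < N)%N -> ((x%:R : Z) \in pmult m) = (p ^ m %| x)%N.
Proof. by move=> xN; rewrite inE val_natZ modn_small. Qed.

Lemma pmult0 m : (0 : Z) \in pmult m.
Proof. by rewrite inE dvdn0. Qed.

Lemma pmultS m t : t \in pmult m.+1 -> t \in pmult m.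
Proof. by rewrite !inE; apply: dvdn_trans; rewrite dvdn_exp2l. Qed.

Lemma pmult_mulp m y : (m <= k)%N -> (p ^ m)%N%:R * y \in pmult m.
Proof. by move=> mk; rewrite mem_pmult //; apply/existsP; exists y. Qed.

Lemma pmultD v z y : (v <= k)%N -> z \in pmult v -> y \in pmult v -> z + y \in pmult v.
Proof.
move=> vk; rewrite !mem_pmult // => /existsP[a /eqP ->] /existsP[b /eqP ->].
by apply/existsP; exists (a + b); rewrite mulrDr.
Qed.

Lemma pmultB v z y : (v <= k)%N -> z \in pmult v -> y \in pmult v -> z - y \in pmult v.
Proof.
move=> vk; rewrite !mem_pmult // => /existsP[a /eqP ->] /existsP[b /eqP ->].
by apply/existsP; exists (a - b); rewrite mulrBr.
Qed.

Lemma pmultN m z : (m <= k)%N -> (- z \in pmult m) = (z \in pmult m).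
Proof.
move=> mk; apply/idP/idP => zH.
  by rewrite -[z]opprK -sub0r; apply: pmultB => //; apply: pmult0.
by rewrite -sub0r; apply: pmultB => //; apply: pmult0.
Qed.

Lemma pmultM v z y : (v <= k)%N -> z \in pmult v -> z * y \in pmult v.
Proof.
move=> vk; rewrite !mem_pmult // => /existsP[a /eqP ->].
by apply/existsP; exists (a * y); rewrite mulrA.
Qed.

Lemma pmult_unit v z u : (v <= k)%N -> u \is a GRing.unit ->
  (z * u \in pmult v) = (z \in pmult v).
Proof.
move=> vk uU; apply/idP/idP => [zu|]; last exact: pmultM.
by rewrite -(mulrK uU z); apply: pmultM.
Qed.

Lemma pmult_addr m x y : (m <= k)%N ->
  (x + (p ^ m)%N%:R * y \in pmult m) = (x \in pmult m).
Proof.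
move=> mk; apply/idP/idP => xH; last by apply: pmultD => //; apply: pmult_mulp.
by rewrite -(addrK ((p ^ m)%N%:R * y) x); apply: pmultB => //; apply: pmult_mulp.
Qed.

Lemma pmult_diff m (r r' : nat) : (m <= k)%N -> (r < p ^ m)%N -> (r' < p ^ m)%N ->
  ((r'%:R - r%:R : Z) \in pmult m) = (r' == r).
Proof.
move=> mk rM r'M.
have MN : (p ^ m <= N)%N by rewrite N_pk leq_exp2l.
have small x : (0 < x)%N -> (x < p ^ m)%N -> ~~ (p ^ m %| x)%N.
  by move=> x0 xM; apply/negP => /(dvdn_leq x0); rewrite leqNgt xM.
case: (ltngtP r r') => [lt|lt|->]; last by rewrite subrr pmult0.
  have dM : (r' - r < p ^ m)%N by apply: leq_ltn_trans (leq_subr _ _) r'M.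
  rewrite -natrB ?(ltnW lt) // pmult_nat ?(leq_trans dM MN) //.
  by apply/negbTE/small; rewrite ?subn_gt0.
have dM : (r - r' < p ^ m)%N by apply: leq_ltn_trans (leq_subr _ _) rM.
rewrite -opprB -natrB ?(ltnW lt) // pmultN // pmult_nat ?(leq_trans dM MN) //.
by apply/negbTE/small; rewrite ?subn_gt0.
Qed.

Lemma sum_pmult v (F : Z -> int) : (v <= k)%N ->
  \sum_(z in pmult v) F z = \sum_(i < p ^ (k - v)) F ((i * p ^ v)%N%:R).
Proof.
move=> vk; have pv0 : (0 < p ^ v)%N by rewrite expn_gt0 p_gt0.
have lt i : (i < p ^ (k - v))%N -> (i * p ^ v < N)%N.
  by move=> il; rewrite -(pmult_split vk) ltn_pmul2r.
pose g (i : 'I_(p ^ (k - v))) : Z := (i * p ^ v)%N%:R.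
have -> : pmult v = [set g i | i in [set: 'I_(p ^ (k - v))]].
  apply/setP=> z; rewrite inE; apply/idP/imsetP.
    case/dvdnP=> q zq; have qG : (q < p ^ (k - v))%N.
      by rewrite -(ltn_pmul2r pv0) -zq (pmult_split vk) ltn_ord.
    by exists (Ordinal qG); rewrite ?inE // /g /= -zq natZ_val.
  by case=> i _ ->; rewrite /g val_natZ modn_small ?lt ?ltn_ord // dvdn_mull.
rewrite big_imset /=; last first.
  move=> i j _ _ /(congr1 val); rewrite /g !val_natZ !modn_small ?lt ?ltn_ord //.
  by move/eqP; rewrite eqn_pmul2r // => /eqP/val_inj.
by apply: eq_bigl => i; rewrite inE.
Qed.

Lemma card_pmult v : (v <= k)%N -> #|pmult v| = (p ^ (k - v))%N.
Proof.
move=> vk; have := sum_pmult (fun _ => 1) vk.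
by rewrite !sumr_const card_ord => /eqP; rewrite eqr_nat => /eqP.
Qed.

Lemma sum_pmult_translate v z (F : Z -> int) : (v <= k)%N -> z \in pmult v ->
  \sum_(w in pmult v) F (w - z) = \sum_(w in pmult v) F w.
Proof.
move=> vk zH; rewrite [RHS](reindex_inj (addIr (- z))) /=.
apply: eq_bigl => w; apply/idP/idP => wH; first exact: pmultB.
by rewrite -(subrK z w); apply: pmultD.
Qed.

(* The cosets x + p^v Z_N are progressions of difference p^v, so for v < k
   their colour sums are bounded by D; their second moment is the
   correlation mass Qcorr v of the ideal p^v Z_N. *)
Definition coset_sum v (x : Z) : int := \sum_(z in pmult v) sgn (x + z).
Definition Qcorr v : int := \sum_(z in pmult v) corr z.

Lemma coset_sum_sqr v : (v <= k)%N ->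
  (#|pmult v|)%:R * Qcorr v = \sum_x (coset_sum v x) ^+ 2.
Proof.
move=> vk.
have -> : \sum_x (coset_sum v x) ^+ 2 =
          \sum_(z in pmult v) \sum_(z' in pmult v) corr (z' - z).
  transitivity (\sum_x \sum_(z in pmult v) \sum_(z' in pmult v) sgn (x + z) * sgn (x + z')).
    apply: eq_bigr => x _; rewrite expr2 mulr_suml; apply: eq_bigr => z _.
    by rewrite mulr_sumr.
  rewrite exchange_big /=; apply: eq_bigr => z zH; rewrite exchange_big /=.
  apply: eq_bigr => z' _; rewrite /corr -(sum_translate _ (- z)).
  by apply: eq_bigr => x _; rewrite addrNK addrAC -addrA.
rewrite (eq_bigr (fun _ => Qcorr v)) ?sumr_const ?mulr_natl //.
by move=> z zH; exact: (sum_pmult_translate corr vk zH).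
Qed.

Lemma coset_sum_le_D m x : (m < k)%N -> `|coset_sum m x| <= (D : int).
Proof.
move=> mk; have mk' := ltnW mk.
have pmN : (p ^ m < N)%N by rewrite N_pk ltn_exp2l.
have lt i : (i < p ^ (k - m))%N -> (i * p ^ m < N)%N.
  by move=> il; rewrite -(pmult_split mk') ltn_pmul2r ?expn_gt0 ?p_gt0.
have lN : (p ^ (k - m) < N.+1)%N.
  by rewrite ltnS -(pmult_split mk') leq_pmulr ?expn_gt0 ?p_gt0.
rewrite /coset_sum sum_pmult //; under eq_bigr do rewrite natrM.
rewrite -chi_sum_ap; first last.
- move=> i j il jl; rewrite -!natrM => /(congr1 val).
  rewrite !val_natZ !modn_small ?lt // => /eqP.
  by rewrite eqn_pmul2r ?expn_gt0 ?p_gt0 // => /eqP.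
- by rewrite -ltnS.
apply: (@ap_le_D x _ _ lN).
rewrite val_natZ modn_small //.
have /gcdn_idPr -> : (p ^ m %| N)%N by rewrite N_pk dvdn_exp2l.
by rewrite -(pmult_split mk') mulnK ?expn_gt0 ?p_gt0.
Qed.

Lemma Qcorr_le_D m : (m < k)%N -> Qcorr m <= (p ^ m)%N%:R * (D%:Z) ^+ 2.
Proof.
move=> mk; have mk' := ltnW mk.
have pos : 0 < (p ^ (k - m))%N%:R :> int by rewrite ltr0n expn_gt0 p_gt0.
rewrite -(ler_pM2l pos) -(card_pmult mk') coset_sum_sqr //.
rewrite card_pmult // mulrA -natrM pmult_split //.
apply: (@le_trans _ _ (\sum_(x : Z) (D%:Z) ^+ 2)).
  by apply: ler_sum => x _; apply/sqr_le_norm/coset_sum_le_D.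
by rewrite sumr_const card_ord -[_ *+ N]mulr_natl.
Qed.

Lemma Qcorr_le_triv v : (v <= k)%N -> Qcorr v <= (p ^ (k - v))%N%:R * N%:R.
Proof.
move=> vk; apply: (@le_trans _ _ (\sum_(z in pmult v) (N%:R : int))).
  by apply: ler_sum => z _; apply: corr_le.
by rewrite sumr_const card_pmult // mulr_natl.
Qed.

Lemma unit_coprime_p (a : nat) : coprime p a -> (a%:R : Z) \is a GRing.unit.
Proof. by move=> cp; rewrite unit_natZ N_pk; apply: coprimeXl. Qed.

Lemma unit_1p (y : Z) : 1 + p%:R * y \is a GRing.unit.
Proof.
rewrite -[y]natZ_val -natrM addrC natr1; apply: unit_coprime_p.
rewrite prime_coprime // -addn1 dvdn_addr ?dvdn_mulr // dvdn1.
by rewrite neq_ltn p_gt1 orbT.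
Qed.

Lemma unit_digit (x : nat) : (0 < x < p)%N -> (x%:R : Z) \is a GRing.unit.
Proof.
case/andP=> x0 xp; apply: unit_coprime_p; rewrite prime_coprime //.
by apply/negP => /(dvdn_leq x0); rewrite leqNgt xp.
Qed.

(* ucorr t only depends on t modulo p^m when p^m does not divide t:
   t + p^m s = t (1 + p (...)) is a unit multiple of t. *)
Lemma ucorr_shift m (t s : Z) : (m <= k)%N -> t \notin pmult m ->
  ucorr (t + (p ^ m)%N%:R * s) = ucorr t.
Proof.
move=> mk; rewrite inE => ndv.
have t0 : (0 < t)%N.
  by rewrite lt0n; apply: contraNneq ndv => ->; rewrite dvdn0.
case: (pfactor_coprime p_prime t0) => a cpa ta.
set v := logn p t in ta.
have vm : (v < m)%N.
  rewrite ltnNge; apply: contraNN ndv => mv.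
  by rewrite ta; apply: dvdn_mull; rewrite dvdn_exp2l.
have aU := unit_coprime_p cpa.
pose w := 1 + p%:R * ((p ^ (m - v).-1)%N%:R * s * (a%:R)^-1).
suff -> : t + (p ^ m)%N%:R * s = t * w by rewrite ucorr_unit ?unit_1p.
have tE : t = a%:R * (p ^ v)%N%:R by rewrite -natrM -ta natZ_val.
have pmE : (p ^ m)%N = (p ^ v * (p * p ^ (m - v).-1))%N.
  by rewrite -expnS prednK ?subn_gt0 // -expnD subnKC // ltnW.
rewrite /w pmE !natrM tE mulrDr mulr1; congr (_ + _).
move: (mulrV aU); set ai := (a%:R)^-1; move: ai => ai e.
by rewrite -[LHS]mul1r -[X in X * _]e; ring.
Qed.

Lemma ucorr_level m t : (m < k)%N -> t \in pmult m -> t \notin pmult m.+1 ->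
  ucorr t = ucorr ((p ^ m)%N%:R).
Proof.
move=> mk; rewrite !inE => /dvdnP[q tq] nd.
have cq : coprime p q.
  rewrite prime_coprime //; apply: contraNN nd => /dvdnP[r qr].
  by rewrite tq qr -mulnA -expnS dvdn_mull.
have -> : t = (q * p ^ m)%N%:R by apply: val_inj; rewrite val_natZ -tq modn_small.
by rewrite natrM mulrC ucorr_unit // unit_coprime_p.
Qed.

Lemma ucorr_digit m (s s' : nat) : (s < p)%N -> (s' < p)%N -> s != s' ->
  ucorr ((p ^ m)%N%:R * (s'%:R - s%:R)) = ucorr ((p ^ m)%N%:R).
Proof.
move=> sp s'p ne; rewrite ucorr_unit //.
case: (ltngtP s s') => [lt|lt|eq]; last by move: ne; rewrite eq eqxx.
  rewrite -natrB ?(ltnW lt) // unit_digit // subn_gt0 lt /=.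
  by apply: leq_ltn_trans s'p; apply: leq_subr.
rewrite -opprB -natrB ?(ltnW lt) // unitrN unit_digit // subn_gt0 lt /=.
by apply: leq_ltn_trans sp; apply: leq_subr.
Qed.

Lemma ucorr_level_sum m : (m < k)%N ->
  ((p ^ (k - m))%N%:R - (p ^ (k - m.+1))%N%:R) * ucorr ((p ^ m)%N%:R)
  = (#|Zunits|)%:R * (Qcorr m - Qcorr m.+1).
Proof.
move=> mk; have mk' := ltnW mk.
have split (F : Z -> int) : \sum_(t in pmult m) F t =
    \sum_(t in pmult m.+1) F t + \sum_(t in pmult m | t \notin pmult m.+1) F t.
  rewrite (bigID (fun t => t \in pmult m.+1)) /=; congr (_ + _).
  apply: eq_bigl => t; apply/andP/idP => [[]//|tH]; split => //; exact: pmultS.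
have count : (p ^ (k - m))%N%:R - (p ^ (k - m.+1))%N%:R =
             \sum_(t in pmult m | t \notin pmult m.+1) (1 : int).
  have := split (fun _ => 1); rewrite !sumr_const !card_pmult // => ->.
  by rewrite addrAC subrr add0r.
rewrite count mulr_suml /Qcorr mulrBr -!sum_ucorr; try by move=> u z uU; apply: pmult_unit.
rewrite split addrAC subrr add0r; apply: eq_bigr => t /andP[t1 t2].
by rewrite mul1r (ucorr_level mk t1 t2).
Qed.

Definition row_corr m r : int :=
  \sum_(r' < p ^ m | r' != r :> nat) ucorr (r'%:R - r%:R).

Lemma row_corr_eq m r : (m <= k)%N -> (r < p ^ m)%N ->
  \sum_(t | t \notin pmult m) ucorr t = (p ^ (k - m))%N%:R * row_corr m r.
Proof.
move=> mk rM; rewrite (reindex_inj (addIr (- r%:R))) /= big_mkcond /=.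
pose F i : int := if i%:R - r%:R \notin pmult m then ucorr (i%:R - r%:R) else 0.
rewrite sumZ_nat (sum_ord_blocks F (esym (pmult_split mk))).
transitivity (\sum_(s < p ^ (k - m)) row_corr m r); last first.
  by rewrite sumr_const card_ord mulr_natl.
apply: eq_bigr => s _; rewrite /row_corr [RHS]big_mkcond /=; apply: eq_bigr => r' _.
rewrite /F.
have -> : ((r' + p ^ m * s)%N%:R + - r%:R : Z) = (r'%:R - r%:R) + (p ^ m)%N%:R * s%:R.
  by rewrite natrD natrM; ring.
rewrite pmult_addr // pmult_diff //; case: eqP => //= /eqP ne.
by rewrite ucorr_shift // pmult_diff.
Qed.

Lemma row_corr_sum m : (m <= k)%N ->
  (p ^ (k - m))%N%:R * \sum_(r < p ^ m) row_corr m r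
  = (p ^ m)%N%:R * ((#|Zunits|)%:R * (corr_total - Qcorr m)).
Proof.
move=> mk.
have outer : \sum_(t | t \notin pmult m) ucorr t
             = (#|Zunits|)%:R * (corr_total - Qcorr m).
  have := sum_ucorr_all; rewrite (bigID (fun t => t \in pmult m)) /= => e.
  rewrite mulrBr -e /Qcorr sum_ucorr; first by rewrite addrC addrK.
  by move=> u z uU; apply: pmult_unit.
rewrite mulr_sumr -outer (eq_bigr (fun _ => \sum_(t | t \notin pmult m) ucorr t)).
  by rewrite sumr_const card_ord mulr_natl.
by move=> r _; rewrite (row_corr_eq mk (ltn_ord r)).
Qed.

Lemma sum_ucorr_digits m c (s : nat) : (c <= p)%N -> (s < c)%N ->
  \sum_(s' < c) ucorr ((p ^ m)%N%:R * (s'%:R - s%:R))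
  = ucorr 0 + (c.-1)%:R * ucorr ((p ^ m)%N%:R).
Proof.
move=> cp sc; rewrite (bigD1 (Ordinal sc)) //= subrr mulr0; congr (_ + _).
rewrite (eq_bigr (fun _ => ucorr ((p ^ m)%N%:R))).
  by rewrite sumr_const mulr_natl cardC1 card_ord.
move=> s' ne; apply: ucorr_digit.
- exact: leq_trans sc cp.
- exact: leq_trans (ltn_ord s') cp.
by rewrite eq_sym; apply: contra ne => /eqP e; apply/eqP/val_inj.
Qed.

Lemma sum_ucorr_residues m (r s s' : nat) : (m <= k)%N -> (r < p ^ m)%N ->
  \sum_(r' < p ^ m) ucorr ((r' + p ^ m * s')%N%:R - (r + p ^ m * s)%N%:R)
  = ucorr ((p ^ m)%N%:R * (s'%:R - s%:R)) + row_corr m r.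
Proof.
move=> mk rM.
have eq r' : ((r' + p ^ m * s')%N%:R - (r + p ^ m * s)%N%:R : Z)
             = (r'%:R - r%:R) + (p ^ m)%N%:R * (s'%:R - s%:R).
  by rewrite !natrD !natrM; ring.
rewrite (bigD1 (Ordinal rM)) //= eq subrr add0r; congr (_ + _).
by apply: eq_bigr => r' ne; rewrite eq ucorr_shift // pmult_diff.
Qed.

Lemma moment_block m c : (m <= k)%N -> (c <= p)%N ->
  \sum_(i < c * p ^ m) \sum_(j < c * p ^ m) ucorr (j%:R - i%:R)
  = (c * c)%:R * \sum_(r < p ^ m) row_corr m r
    + (c * p ^ m)%:R * (ucorr 0 + (c.-1)%:R * ucorr ((p ^ m)%N%:R)).
Proof.
move=> mk cp.
rewrite (sum_ord_blocks (fun i => \sum_(j < c * p ^ m) ucorr (j%:R - i%:R)) erefl).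
transitivity (\sum_(s < c) \sum_(r < p ^ m)
   (ucorr 0 + (c.-1)%:R * ucorr ((p ^ m)%N%:R) + c%:R * row_corr m r)).
  apply: eq_bigr => s _; apply: eq_bigr => r _.
  rewrite (sum_ord_blocks (fun j => ucorr (j%:R - (r + p ^ m * s)%N%:R)) erefl).
  under eq_bigr => s' _ do rewrite sum_ucorr_residues //.
  rewrite big_split /= sum_ucorr_digits //.
  by rewrite sumr_const card_ord [c%:R * _]mulr_natl.
rewrite (eq_bigr (fun _ => (p ^ m)%N%:R * (ucorr 0 + (c.-1)%:R * ucorr ((p ^ m)%N%:R))
                         + c%:R * \sum_(r < p ^ m) row_corr m r)); last first.
  move=> s _; rewrite big_split /= sumr_const card_ord -mulr_sumr.
  by rewrite [(p ^ m)%N%:R * _]mulr_natl.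
rewrite sumr_const card_ord -[_ *+ c]mulr_natl !natrM; ring.
Qed.

Lemma colouring_bound m c : (m < k)%N -> (0 < c < p)%N ->
  (p ^ m * p <= (p ^ (k - m)) ^ 2)%N ->
  (p * p ^ m * (c * (p - c)) <= D ^ 2 * (p * (p - 1) + c * (p - c)))%N.
Proof.
move=> mk /andP[c0 cp] hmp; have mk' := ltnW mk.
have pkm : (p ^ (k - m) = p * p ^ (k - m.+1))%N by rewrite -expnS subnSK.
have NE : (N%:R : int) = (p ^ m)%N%:R * p%:R * (p ^ (k - m.+1))%N%:R.
  by rewrite -!natrM -mulnA -pkm mulnC pmult_split.
have LN : (c * p ^ m <= N)%N.
  rewrite -(pmult_split mk') leq_mul2r pkm (leq_trans (ltnW cp)) ?orbT //.
  by rewrite leq_pmulr // expn_gt0 p_gt0.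
have W0 : 0 < (#|Zunits|)%:R :> int.
  by rewrite ltr0n; apply/card_gt0P; exists 1; rewrite inE unitr1.
have M0 : 0 < (p ^ m)%N%:R :> int by rewrite ltr0n expn_gt0 p_gt0.
have G0 : 0 < (p ^ (k - m.+1))%N%:R :> int by rewrite ltr0n expn_gt0 p_gt0.
have c1 : 1 <= c%:R :> int by rewrite ler1n.
have cP : c%:R < p%:R :> int by rewrite ltr_nat.
have D0 : 0 <= (D%:Z) ^+ 2 by apply: sqr_ge0.
have hMP : (p ^ m)%N%:R * p%:R <= (p%:R * (p ^ (k - m.+1))%N%:R) ^+ 2 :> int.
  by rewrite -!natrM -natrX -pkm ler_nat.
have hS : moment (c * p ^ m) = c%:R ^+ 2 * \sum_(r < p ^ m) row_corr m r
    + c%:R * (p ^ m)%N%:R * ((#|Zunits|)%:R * ((p ^ m)%N%:R * p%:R * (p ^ (k - m.+1))%N%:R)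
                             + (c%:R - 1) * ucorr ((p ^ m)%N%:R)).
  rewrite moment_eq moment_block ?(ltnW cp) // ucorr0 NE -subn1 natrB //.
  by rewrite !natrM; ring.
have hRs : p%:R * (p ^ (k - m.+1))%N%:R * \sum_(r < p ^ m) row_corr m r
           = (p ^ m)%N%:R * (#|Zunits|)%:R * (corr_total - Qcorr m).
  by rewrite -natrM -pkm row_corr_sum // mulrA.
have hhM : (p%:R - 1) * (p ^ (k - m.+1))%N%:R * ucorr ((p ^ m)%N%:R)
           = (#|Zunits|)%:R * (Qcorr m - Qcorr m.+1).
  by rewrite -ucorr_level_sum // pkm natrM; ring.
have hSle : moment (c * p ^ m) <= (p ^ m)%N%:R * p%:R * (p ^ (k - m.+1))%N%:R
                                  * (#|Zunits|)%:R * (D%:Z) ^+ 2.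
  by rewrite -mulrA -NE; apply: moment_le.
have hQm1 : Qcorr m.+1 <= (p ^ m)%N%:R * p%:R * (p ^ (k - m.+1))%N%:R ^+ 2.
  have -> : (p ^ m)%N%:R * p%:R * (p ^ (k - m.+1))%N%:R ^+ 2
            = (p ^ (k - m.+1))%N%:R * N%:R :> int by rewrite NE; ring.
  exact: Qcorr_le_triv.
rewrite -(@ler_nat int) [X in _ <= X]natrM (natrX _ D 2) (natz D).
rewrite !natrM natrD !natrM !natrB ?(ltnW cp) //.
have P1 : 1 < p%:R :> int by rewrite ltr1n.
exact: (energy_inequality M0 G0 c1 cP D0 hMP
          (moment_mass_bound W0 M0 G0 P1 hS hRs hhM hSle)
          corr_total_ge0 (Qcorr_le_D mk) hQm1).
Qed.

End PrimePower.

End Colouring.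

Local Close Scope ring_scope.

Lemma half_split_bound p : 1 < p ->
  p * (p - 1) + p./2 * (p - p./2) <= 6 * (p./2 * (p - p./2)).
Proof.
move=> p1; have := odd_double_half p; move: (p./2) => c.
by case: (odd p) => /= hp; rewrite -hp -muln2 in p1 *; nia.
Qed.

Lemma max_disc_sqr_bound n' (chi : {ffun 'I_n'.+2 -> bool}) p k :
  prime p -> 0 < k -> n'.+2 = p ^ k ->
  p ^ (k - k %/ 3) <= 6 * max_disc chi ^ 2.
Proof.
move=> pr k0 Nk; have p1 := prime_gt1 pr.
set m := (2 * k - 1) %/ 3.
have mk : m < k by rewrite /m; lia.
have hmp : p ^ m * p <= (p ^ (k - m)) ^ 2.
  by rewrite -expnSr -expnM leq_exp2l // /m; lia.
have c_pos : 0 < p./2 < p.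
  by rewrite half_gt0 p1 ltn_half_double -muln2; lia.
have K0 : 0 < p./2 * (p - p./2).
  by case/andP: c_pos => c0 cp; rewrite muln_gt0 c0 subn_gt0.
have -> : k - k %/ 3 = m.+1 by rewrite /m; lia.
rewrite expnSr -(leq_pmul2r K0) (mulnC _ p).
apply: leq_trans (colouring_bound chi pr Nk mk c_pos hmp) _.
by rewrite [6 * _]mulnC -mulnA leq_mul2l half_split_bound ?orbT.
Qed.

(* The same bound for disc(A_N), a minimum over colourings whose default
   value N is itself large enough. *)
Lemma disc_AP_sqr_bound p k : prime p -> 0 < k ->
  p ^ (k - k %/ 3) <= 6 * disc_AP (p ^ k) ^ 2.
Proof.
move=> pr k0; have p1 := prime_gt1 pr.
have pk1 : 1 < p ^ k by rewrite -[1](expn0 p) ltn_exp2l.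
have ek : p ^ (k - k %/ 3) <= p ^ k by rewrite leq_exp2l // leq_subr.
case E: (p ^ k) pk1 ek => [|[|n']] // _ ek.
rewrite /disc_AP; apply: (big_ind (fun x => p ^ (k - k %/ 3) <= 6 * x ^ 2)).
- by apply: (leq_trans ek); rewrite expnS expn1; nia.
- by move=> x y hx hy; case: (leqP x y).
by move=> chi _; apply: max_disc_sqr_bound.
Qed.

Section RealBound.
Local Open Scope R_scope.

Lemma INR_expn (p e : nat) : INR (p ^ e) = INR p ^ e.
Proof.
elim: e => [|e IH]; first by rewrite expn0.
by rewrite expnS mulnE mult_INR IH.
Qed.

Lemma Rpower_half_sqr (b : R) (e : nat) : 0 < b ->
  Rpower b (INR e / INR 2) * Rpower b (INR e / INR 2) = b ^ e.
Proof.
move=> b0; rewrite -Rpower_plus -Rpower_pow //; congr Rpower.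
have -> : INR 2 = 2 by rewrite /=; Lra.lra.
Lra.lra.
Qed.

Lemma quarter_le (y d : R) : 0 <= y -> 0 <= d -> y * y <= 6 * (d * d) -> / INR 4 * y <= d.
Proof.
move=> y0 d0 h; have -> : INR 4 = 4 by rewrite /=; Lra.lra.
Lra.nra.
Qed.

End RealBound.

Theorem corollary4p9 (p k : nat) :
  prime p -> 0 < k ->
  Rle (Rmult (Rinv (INR 4)) (Rpower (INR p) (Rdiv (INR (k - k %/ 3)) (INR 2))))
      (INR (disc_AP (p ^ k))).
Proof.
move=> pr k0.
have p0 : Rlt 0 (INR p) by apply/lt_0_INR/ssrnat.ltP/prime_gt0.
apply: quarter_le; [exact/Rlt_le/exp_pos | exact: pos_INR |].
rewrite Rpower_half_sqr // -INR_expn.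
have -> : Rmult 6 (Rmult (INR (disc_AP (p ^ k))) (INR (disc_AP (p ^ k))))
          = INR (6 * disc_AP (p ^ k) ^ 2).
  by rewrite mulnE mult_INR INR_expn /=; Lra.lra.
exact/le_INR/ssrnat.leP/disc_AP_sqr_bound.
Qed.
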